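(* Let $C$ be a cycle graph. If $u$ and $v$ are non-adjacent vertices of $C$, then there exists a u-switch $\tau$ over $C$ such that $uv\in E(\tau(C))$.
   Context: Graphs are finite, simple, undirected, labeled. A unicyclic graph is a connected graph with exactly one cycle. For vertices $a,b,c,d$, $A=\binom{a\ b}{c\ d}$ is interchangeable in $G$ if $ab,cd\in E(G)$, $\{a,b\}\cap\{c,d\}=\varnothing$, $ac,bd\notin E(G)$; the 2-switch $\tau_A$ sends $G$ to $G-ab-cd+ac+bd$ if $A$ is interchangeable and to $G$ otherwise (trivial). A nontrivial 2-switch $\tau$ over a unicyclic $U$ is a u-switch if $\tau(U)$ is unicyclic. *)

(* Graphs on a finite labeled vertex type T are represented
   by their edge sets E : {set {set T}}, each edge being a 2-element set. *)
From mathcomp Require Import all_boot.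
Set Implicit Arguments. Unset Strict Implicit. Unset Printing Implicit Defensive.

Section Graphs.
Variable T : finType.
Implicit Types (E F : {set {set T}}) (a b c d x y : T).

Definition simple_graph E : Prop := forall e, e \in E -> #|e| = 2.

Definition adj E : rel T := fun x y => [set x; y] \in E.

Definition neighbours E x : {set T} := [set y | adj E x y].
Definition degree E x : nat := #|neighbours E x|.

Definition connected_graph E : Prop := forall x y, connect (adj E) x y.

Definition covered F : {set T} := [set x | [exists e in F, x \in e]].

Definition is_cycle E F : Prop :=
  [/\ F \subset E, F != set0,
      (forall x, x \in covered F -> degree F x = 2) &
      (forall x y, x \in covered F -> y \in covered F -> connect (adj F) x y)].

Definition unicyclic E : Prop :=
  simple_graph E /\ connected_graph E /\
  exists F, is_cycle E F /\ forall F', is_cycle E F' -> F' = F.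

Definition cycle_graph E : Prop :=
  simple_graph E /\ connected_graph E /\ forall x, degree E x = 2.

Definition interchangeable E a b c d : Prop :=
  [/\ adj E a b, adj E c d,
      [disjoint [set a; b] & [set c; d]],
      ~~ adj E a c & ~~ adj E b d].

Definition switch_edges E a b c d : {set {set T}} :=
  (E :\ [set a; b] :\ [set c; d]) :|: [set [set a; c]; [set b; d]].

Definition two_switch E a b c d : {set {set T}} :=
  if [&& adj E a b, adj E c d, [disjoint [set a; b] & [set c; d]],
         ~~ adj E a c & ~~ adj E b d]
  then switch_edges E a b c d else E.

Definition u_switch E a b c d : Prop :=
  interchangeable E a b c d /\ unicyclic (two_switch E a b c d).

End Graphs.

(* Walk from u to v along the cycle by a path with no chord at u; let d be the
   vertex just before v and b the neighbour of u off the path.  The 2-switch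
   (u b; v d) deletes ub and vd and adds uv and bd.  Every 2-switch preserves
   degrees, and this one keeps the arc u..d, which the new edges uv and bd close
   up with the arc v..b into a single cycle.  So the result is again a connected
   2-regular graph, hence unicyclic. *)

From mathcomp Require Import all_boot.
Set Implicit Arguments. Unset Strict Implicit. Unset Printing Implicit Defensive.

Section Graphs.
Variable T : finType.
Implicit Types (E F : {set {set T}}) (a b c d x y z : T).

Lemma adjC E : symmetric (adj E).
Proof. by move=> x y; rewrite /adj setUC. Qed.

Lemma adj_connect_sym E : connect_sym (adj E).
Proof. exact/sym_connect_sym/adjC. Qed.

Lemma simple_adj_neq E x y : simple_graph E -> adj E x y -> x != y.
Proof. by move=> sE /sE; rewrite cards2; case: (x != y). Qed.

Lemma eq_set2 a b c d :
  ([set a; b] == [set c; d]) = (a == c) && (b == d) || (a == d) && (b == c).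
Proof.
apply/eqP/idP=> [/setP eq_ab_cd | /orP[]/andP[/eqP-> /eqP->] //]; last exact: setUC.
move: (eq_ab_cd a) (eq_ab_cd b) (eq_ab_cd c) (eq_ab_cd d); rewrite !inE !eqxx ?orbT.
by do 2!move=> /esym/orP[]/eqP ?; do 2!move=> /orP[]/eqP ?; subst; rewrite ?eqxx ?orbT.
Qed.

Lemma disjoint_set2 a b c d :
  [disjoint [set a; b] & [set c; d]] = [&& a != c, a != d, b != c & b != d].
Proof. by rewrite disjoints_subset subUset !sub1set !inE !negb_or !andbA. Qed.

Lemma adj_covered F x y : adj F x y -> y \in covered F.
Proof.
move=> Fxy; rewrite inE; apply/existsP; exists [set x; y].
by rewrite -[_ \in F]/(adj F x y) Fxy !inE eqxx orbT.
Qed.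

Lemma degree2_adj E x y z w : degree E x = 2 -> y != z ->
  adj E x y -> adj E x z -> adj E x w -> (w == y) || (w == z).
Proof.
move=> dx yz xy xz xw; have sub : [set y; z] \subset neighbours E x.
  by apply/subsetP=> t; rewrite !inE => /orP[]/eqP->.
have /eqP eqN : [set y; z] == neighbours E x.
  by rewrite eqEcard sub cards2 yz -/(degree E x) dx.
by rewrite -in_set2 eqN inE.
Qed.

Lemma exists_other_adj E x y : degree E x = 2 -> exists z, adj E x z && (z != y).
Proof.
move=> dx; have : 0 < #|neighbours E x :\ y|.
  move: dx; rewrite /degree (cardsD1 y).
  by case: (_ \in _) => /eqP; rewrite ?add0n ?add1n ?eqSS => /eqP->.
by case/card_gt0P=> z; rewrite !inE andbC; exists z.
Qed.

Lemma switch_edgesC E a b c d : switch_edges E a b c d = switch_edges E b a d c.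
Proof. by rewrite /switch_edges [[set b; a]]setUC [[set d; c]]setUC [[set _; [set b; d]]]setUC. Qed.

Lemma switch_edges_sym E a b c d : switch_edges E a b c d = switch_edges E c d a b.
Proof.
by rewrite /switch_edges !setDDl [[set _; [set a; b]]]setUC [[set c; a]]setUC [[set d; b]]setUC.
Qed.

Lemma interchangeableC E a b c d :
  interchangeable E a b c d -> interchangeable E b a d c.
Proof.
case=> ab cd abcd ac bd; split=> //; try by rewrite adjC.
by move: abcd; rewrite !disjoint_set2 => /and4P[-> -> -> ->].
Qed.

Lemma interchangeable_sym E a b c d :
  interchangeable E a b c d -> interchangeable E c d a b.
Proof. by case=> ab cd abcd ac bd; split=> //; rewrite 1?adjC // disjoint_sym. Qed.

Lemma interchangeable_two_switch E a b c d :
  interchangeable E a b c d -> two_switch E a b c d = switch_edges E a b c d.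
Proof. by move=> Habcd; rewrite /two_switch (introT and5P Habcd). Qed.

Lemma switch_edges_adj_ac E a b c d : adj (switch_edges E a b c d) a c.
Proof. by rewrite /adj /switch_edges !inE eqxx orbT. Qed.

Lemma switch_edges_adj_bd E a b c d : adj (switch_edges E a b c d) b d.
Proof. by rewrite switch_edgesC switch_edges_adj_ac. Qed.

Lemma switch_edges_adj_kept E a b c d x y : adj E x y ->
  x \notin [set b; c] -> y \notin [set b; c] -> adj (switch_edges E a b c d) x y.
Proof.
rewrite !inE !negb_or => Exy /andP[xb xc] /andP[yb yc].
rewrite /adj /switch_edges !inE !eq_set2 -[_ \in E]/(adj E x y) Exy.
by rewrite (negbTE xb) (negbTE yb) (negbTE xc) (negbTE yc) !andbF.
Qed.

Lemma switch_edges_path E a b c d x p : b \notin x :: p -> c \notin x :: p ->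
  path (adj E) x p -> path (adj (switch_edges E a b c d)) x p.
Proof.
move=> b_p c_p; apply: (sub_in_path (P := [predC [set b; c]])).
  by move=> y z yP zP Eyz; apply: switch_edges_adj_kept.
apply/allP=> z zp; rewrite !inE negb_or.
by apply/andP; split; [apply: contraNneq b_p | apply: contraNneq c_p] => <-.
Qed.

Lemma switch_edges_simple E a b c d : simple_graph E ->
  interchangeable E a b c d -> simple_graph (switch_edges E a b c d).
Proof.
move=> sE [_ _ + _ _]; rewrite disjoint_set2 => /and4P[ac _ _ bd] e.
by rewrite !inE => /or3P[/and3P[_ _ /sE] | /eqP-> | /eqP->] //; rewrite cards2 ?ac ?bd.
Qed.

Lemma neighbours_switch_edges_first E a b c d : simple_graph E ->
  interchangeable E a b c d ->
  neighbours (switch_edges E a b c d) a = c |: (neighbours E a :\ b).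
Proof.
move=> sE [/(simple_adj_neq sE) ab _ + _ _]; rewrite disjoint_set2 => /and4P[ac ad _ _].
apply/setP=> z; rewrite /neighbours /adj /switch_edges !inE !eq_set2 !eqxx.
by rewrite (negbTE ab) (negbTE ac) (negbTE ad) /= !orbF orbC.
Qed.

Lemma neighbours_switch_edges_other E a b c d x : x \notin [set a; b; c; d] ->
  neighbours (switch_edges E a b c d) x = neighbours E x.
Proof.
rewrite !inE !negb_or -!andbA => /and4P[xa xb xc xd]; apply/setP=> z.
rewrite /neighbours /adj /switch_edges !inE !eq_set2.
by rewrite (negbTE xa) (negbTE xb) (negbTE xc) (negbTE xd) /= orbF.
Qed.

Lemma degree_switch_edges_first E a b c d : simple_graph E ->
  interchangeable E a b c d -> degree (switch_edges E a b c d) a = degree E a.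
Proof.
move=> sE Habcd; rewrite /degree neighbours_switch_edges_first // cardsU1.
by case: Habcd => ab _ _ ac _; rewrite (cardsD1 b (neighbours E a)) !inE ab (negbTE ac) andbF.
Qed.

Lemma degree_switch_edges E a b c d x : simple_graph E ->
  interchangeable E a b c d -> degree (switch_edges E a b c d) x = degree E x.
Proof.
move=> sE Habcd; have [|x_out] := boolP (x \in [set a; b; c; d]); last first.
  by rewrite /degree neighbours_switch_edges_other.
rewrite !inE -!orbA => /or4P[]/eqP->.
- exact: degree_switch_edges_first.
- by rewrite switch_edgesC degree_switch_edges_first //; apply: interchangeableC.
- by rewrite switch_edges_sym degree_switch_edges_first //; apply: interchangeable_sym.
- rewrite switch_edges_sym switch_edgesC degree_switch_edges_first //.
  exact/interchangeableC/interchangeable_sym.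
Qed.

Lemma switch_edges_connected E a b c d : connected_graph E ->
  connect (adj (switch_edges E a b c d)) a d ->
  connected_graph (switch_edges E a b c d).
Proof.
set G := switch_edges E a b c d => cE Gad; have symG := adj_connect_sym G.
have to_a z : z \in [set a; b; c; d] -> connect (adj G) z a.
  rewrite !inE -!orbA => /or4P[]/eqP->.
  - exact: connect0.
  - by apply: connect_trans (connect1 (switch_edges_adj_bd _ _ _ _ _)) _; rewrite symG.
  - by apply: connect1; rewrite adjC switch_edges_adj_ac.
  - by rewrite symG.
suff E_G : subrel (adj E) (connect (adj G)) by move=> x y; apply: connect_sub E_G _ _ (cE x y).
move=> x y Exy; case Gxy : (adj G x y); first exact: connect1.
have removed : ([set x; y] == [set a; b]) || ([set x; y] == [set c; d]).
  move: Gxy; rewrite /adj /switch_edges !inE -[_ \in E]/(adj E x y) Exy andbT.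
  by case: ([set x; y] == [set a; b]); case: ([set x; y] == [set c; d]).
have xy_sub : [set x; y] \subset [set a; b; c; d].
  by case/orP: removed => /eqP->; apply/subsetP=> z; rewrite !inE => /orP[]->; rewrite ?orbT.
apply: connect_trans (to_a x (subsetP xy_sub x (set21 x y))) _.
by rewrite symG; apply: to_a (subsetP xy_sub y (set22 x y)).
Qed.

Lemma switch_edges_cycle_graph E a b c d : cycle_graph E ->
  interchangeable E a b c d -> connect (adj (switch_edges E a b c d)) a d ->
  cycle_graph (switch_edges E a b c d).
Proof.
case=> sE [cE dE] Habcd Gad; split; first exact: switch_edges_simple.
by split; [exact: switch_edges_connected | move=> x; rewrite degree_switch_edges].
Qed.

Lemma cycle_graph_covered E x : cycle_graph E -> x \in covered E.
Proof.
case=> _ [_ dE]; have /card_gt0P[y] : 0 < degree E x by rewrite dE.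
by rewrite inE adjC => /adj_covered.
Qed.

Lemma cycle_graph_cycle_eq E F : cycle_graph E -> is_cycle E F -> F = E.
Proof.
case=> sE [cE dE] [sFE nF dF _].
have E_F x y : x \in covered F -> adj E x y -> adj F x y.
  move=> xF; have sub : neighbours F x \subset neighbours E x.
    by apply/subsetP=> z; rewrite !inE; apply: (subsetP sFE).
  have /eqP/setP/(_ y) : neighbours F x == neighbours E x.
    by rewrite eqEcard sub -/(degree F x) -/(degree E x) dE dF.
  by rewrite !inE => ->.
have covF x : x \in covered F.
  have [e eF] := set0Pn _ nF; have /eqP/cards2P[y [z [_ e_yz]]] := sE e (subsetP sFE e eF).
  have zF : z \in covered F by apply: (@adj_covered F y); rewrite /adj -e_yz.
  have clF : closed (adj E) (covered F).
    by apply: (intro_closed (adj_connect_sym E)) => t w /[swap] tF /(E_F _ _ tF) /adj_covered.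
  by rewrite -(closed_connect clF (cE z x)).
apply/eqP; rewrite eqEsubset sFE; apply/subsetP=> e eE.
have /eqP/cards2P[x [y [_ e_xy]]] := sE e eE.
by rewrite e_xy; apply: E_F (covF x) _; rewrite /adj -e_xy.
Qed.

Lemma cycle_graph_unicyclic E (x0 : T) : cycle_graph E -> unicyclic E.
Proof.
move=> cE; have [sE [cnE dE]] := cE; split=> //; split=> //; exists E.
split=> [|F /(cycle_graph_cycle_eq cE)] //; split=> //.
have := cycle_graph_covered x0 cE; rewrite inE => /existsP[e /andP[eE _]].
by apply/set0Pn; exists e.
Qed.

Lemma chordless_path (e : rel T) x y : connect e x y ->
  exists p, [/\ path e x p, last x p = y, uniq (x :: p) & ~~ has (e x) (behead p)].
Proof.
case/connectP=> p0 /shortenP[p pP pU _] ->.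
have [n] := ubnP (size p); elim: n p pP pU => // n IH [|z q] pP pU; first by exists [::].
rewrite ltnS => size_q.
have [/hasP[w wq xw] | no_chord] := boolP (has (e x) q); last by exists (z :: q).
case/splitPr: wq pP pU size_q => q1 q2 pP pU size_q.
have [|||p [p_path p_last p_uniq p_chord]] := IH (w :: q2).
- by rewrite /= xw; move: pP; rewrite -cat_cons cat_path => /andP[_ /andP[]].
- have sub : subseq ([:: x] ++ w :: q2) ([:: x] ++ (z :: q1) ++ w :: q2).
    by rewrite subseq_cat2l suffix_subseq.
  exact: subseq_uniq sub pU.
- by apply: leq_trans size_q; rewrite /= size_cat /= ltnS leq_addl.
- by exists p; rewrite p_last /= last_cat.
Qed.

Lemma notin_chordless_path (e : rel T) x y p :
  ~~ has (e x) (behead p) -> e x y -> y != head x p -> y \notin p.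
Proof.
case: p => //= z q no_chord xy yz; rewrite inE negb_or yz /=.
by apply: contra no_chord => yq; apply/hasP; exists y.
Qed.

Lemma cycle_graph_switch_witness E u v : cycle_graph E -> u != v -> ~~ adj E u v ->
  exists b d, interchangeable E u b v d /\ connect (adj (switch_edges E u b v d)) u d.
Proof.
case=> sE [cE dE] uv nuv.
have [p [pP pv pU no_chord]] := chordless_path (cE u v).
have [b /andP[ub b_p]] : exists b, adj E u b && (b \notin p).
  have [b /andP[ub b_head]] := exists_other_adj (head u p) (dE u).
  by exists b; rewrite ub (notin_chordless_path no_chord).
clear no_chord; case/lastP: p pP pv pU b_p => [_ /= vu | s w]; first by rewrite vu eqxx in uv.
rewrite last_rcons rcons_path => /andP[sP sv] wv; subst w.
case/lastP: s sP sv => [_ /= uv_adj | r d]; first by rewrite uv_adj in nuv.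
rewrite last_rcons => rdP dv.
have prd : adj E (last u r) d by move: rdP; rewrite rcons_path => /andP[].
rewrite -rcons_cons rcons_uniq => /andP[v_path /andP[u_rd _]].
rewrite mem_rcons inE negb_or => /andP[bv b_rd].
have b_path : b \notin u :: rcons r d by rewrite inE negb_or eq_sym (simple_adj_neq sE ub).
have d_rd : d \in rcons r d by rewrite mem_rcons mem_head.
have nbd : ~~ adj E b d.
  have pr_path : last u r \in u :: rcons r d by rewrite -rcons_cons mem_rcons inE mem_last orbT.
  have pr_v : last u r != v by apply: contraNneq v_path => <-.
  have dpr : adj E d (last u r) by rewrite adjC.
  rewrite adjC; apply/negP => /(degree2_adj (dE d) pr_v dpr dv) /orP[/eqP b_pr | /eqP b_v].
    by rewrite b_pr pr_path in b_path.
  by rewrite b_v eqxx in bv.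
exists b, d; split.
  split=> //; first by rewrite adjC.
  rewrite disjoint_set2 uv bv; apply/and3P; split=> //.
    by apply: contraNneq u_rd => ->.
  by apply: contraNneq b_path => ->; rewrite inE d_rd orbT.
apply: (path_connect (switch_edges_path _ _ b_path v_path rdP)).
by rewrite inE d_rd orbT.
Qed.

End Graphs.

Theorem lemma3p7 (T : finType) (C : {set {set T}}) (u v : T) :
  cycle_graph C -> u != v -> ~~ adj C u v ->
  exists a b c d : T,
    u_switch C a b c d /\ adj (two_switch C a b c d) u v.
Proof.
move=> cC uv nuv; have [b [d [ub_vd Gud]]] := cycle_graph_switch_witness cC uv nuv.
exists u, b, v, d; rewrite /u_switch interchangeable_two_switch //.
split; last exact: switch_edges_adj_ac.
split=> //; apply: (cycle_graph_unicyclic u).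
exact: switch_edges_cycle_graph cC ub_vd Gud.
Qed.
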